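(* For all integers $m,n\ge 0$, the bubble lattice $\mathrm{Bub}(m,n)$ has order dimension $m+n$.
   Context: For a finite directed graph $G$ without multiple edges, a maximal orthogonal pair is a pair $(X,Y)$ of disjoint vertex subsets with no edge from $X$ to $Y$, maximal for this property; ordered by $(X,Y)\le(X',Y')$ iff $X\subseteq X'$ they form a lattice $L(G)$. Let $X=\{x_1,\dots,x_m\}$, $Y=\{y_1,\dots,y_n\}$ be disjoint alphabets. $\mathrm{Bub}(m,n):=L(G)$ where $G$ has vertex set $X\sqcup Y\sqcup(X\times Y)$ and an edge $l_1\to l_2$ ($l_1\neq l_2$) exactly when: $l_1=(x_s,y_t)$ and $l_2=x_s$; or $l_1=y_t$ and $l_2=(x_s,y_t)$; or $l_1=(x_s,y_t)$, $l_2=(x_{s'},y_{t'})$ with $s\ge s'$ and $t\le t'$ (equivalently, $\mathrm{Bub}(m,n)$ is the extremal lattice with this Galois graph). The order dimension of a poset is the least $d$ such that it embeds as a subposet of $\mathbb R^d$ with the componentwise order. *)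

From mathcomp Require Import all_boot.
From Stdlib Require Import Reals.
Set Implicit Arguments. Unset Strict Implicit. Unset Printing Implicit Defensive.

Definition orthogonal_pair (V : finType) (e : rel V) (A B : {set V}) : bool :=
  [disjoint A & B] && [forall a in A, forall b in B, ~~ e a b].

Definition maximal_orthogonal_pair (V : finType) (e : rel V) (A B : {set V}) : Prop :=
  orthogonal_pair e A B /\
  forall A' B' : {set V}, orthogonal_pair e A' B' ->
    A \subset A' -> B \subset B' -> A' = A /\ B' = B.

(* L(G): elements are the maximal orthogonal pairs, ordered by
   (X,Y) <= (X',Y') iff X \subset X'. *)
Definition LG_le (V : finType) (p q : {set V} * {set V}) : bool := p.1 \subset q.1.

Definition LG_embeds_in (V : finType) (e : rel V) (d : nat) : Prop :=
  exists f : {set V} * {set V} -> ('I_d -> R),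
    forall p q : {set V} * {set V},
      maximal_orthogonal_pair e p.1 p.2 -> maximal_orthogonal_pair e q.1 q.2 ->
      (LG_le p q <-> forall i : 'I_d, Rle (f p i) (f q i)).

Definition LG_order_dimension (V : finType) (e : rel V) (d : nat) : Prop :=
  LG_embeds_in e d /\ forall d', LG_embeds_in e d' -> d <= d'.

(* Vertices of the Galois graph of Bub(m,n):
   inl (inl s) = x_s, inl (inr t) = y_t, inr (s,t) = (x_s, y_t). *)
Definition bub_vertex (m n : nat) : finType := ('I_m + 'I_n + 'I_m * 'I_n)%type.

Definition bub_edge (m n : nat) : rel (bub_vertex m n) :=
  fun l1 l2 =>
    (l1 != l2) &&
    match l1, l2 with
    | inr (s, t), inl (inl s') => s == s'
    | inl (inr t), inr (s, t') => t == t'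
    | inr (s, t), inr (s', t') => (s' <= s) && (t <= t')
    | _, _ => false
    end.

From mathcomp Require Import all_boot.
From Stdlib Require Import Reals Classical Lra.

Set Implicit Arguments. Unset Strict Implicit. Unset Printing Implicit Defensive.

(** Upper bound: split the vertices into the m rows
    (x_s,y_0), ..., (x_s,y_(n-1)), x_s and the n singletons {y_t}.  Along a row
    every vertex has an edge to each later one and dominates its
    out-neighbourhood, so the left part X of a maximal orthogonal pair meets
    every block in a final segment; the m + n sizes of these traces are then
    monotone in X and determine the order.
    Lower bound: the x_s and y_t are pairwise non-adjacent, and each vertex v
    among them yields maximal pairs ({v}, _) and (_, {v}) with
    ({u}, _) <= (_, {v}) iff u <> v.  This is the standard example of
    dimension m + n. *)

Section OrthogonalPairs.
Variable V : finType.
Implicit Types (e : rel V) (A B X Y : {set V}).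

Lemma orthogonal_pairP e A B :
  reflect ((forall v, v \in A -> v \notin B) /\
           (forall a b, a \in A -> b \in B -> ~~ e a b))
          (orthogonal_pair e A B).
Proof.
rewrite /orthogonal_pair disjoint_subset.
apply: (iffP andP) => [[/subsetP dAB /forall_inP oAB] | [dAB oAB]]; split.
- by move=> v /dAB; rewrite inE.
- by move=> a b /oAB /forall_inP; apply.
- by apply/subsetP => v /dAB; rewrite inE.
- by apply/forall_inP => a aA; apply/forall_inP => b; apply: oAB.
Qed.

Lemma orthogonal_pair_flip e A B :
  orthogonal_pair [rel u v | e v u] B A = orthogonal_pair e A B.
Proof.
apply/orthogonal_pairP/orthogonal_pairP => /= -[dAB oAB]; split.
- by move=> v vA; apply: contraL vA; apply: dAB.
- by move=> a b aA bB; apply: oAB.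
- by move=> v vB; apply: contraL vB; apply: dAB.
- by move=> b a bB aA; apply: oAB.
Qed.

Lemma maximal_orthogonal_pair_flip e A B :
  maximal_orthogonal_pair [rel u v | e v u] B A <-> maximal_orthogonal_pair e A B.
Proof.
rewrite /maximal_orthogonal_pair orthogonal_pair_flip.
split=> -[oAB maxAB]; split=> // A' B'.
- rewrite -orthogonal_pair_flip => oAB' sA sB.
  by case: (maxAB _ _ oAB' sB sA) => -> ->.
- rewrite orthogonal_pair_flip => oAB' sB sA.
  by case: (maxAB _ _ oAB' sA sB) => -> ->.
Qed.

Lemma mop_succ_closed e X Y u v : maximal_orthogonal_pair e X Y ->
  u \in X -> e u v -> (forall w, e v w -> e u w) -> v \in X.
Proof.
case=> /orthogonal_pairP [dXY oXY] maxXY uX euv out_vu.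
have oXY' : orthogonal_pair e (v |: X) Y.
  apply/orthogonal_pairP; split=> [w | a b]; rewrite in_setU1.
  - case/predU1P => [-> | /dXY //]; apply: contraL euv => vY.
    exact: oXY uX vY.
  - case/predU1P => [-> bY | aX]; last exact: oXY.
    by apply: contraNN (oXY _ _ uX bY); apply: out_vu.
by case: (maxXY _ _ oXY' (subsetUr _ _) (subxx _)) => <- _; rewrite setU11.
Qed.

Definition escapes e v := forall w, e v w -> exists z, [/\ e w z, z != v & ~~ e v z].

Lemma mop_singleton_l e v : escapes e v ->
  maximal_orthogonal_pair e [set v] [set w | (w != v) && ~~ e v w].
Proof.
move=> esc_v; split.
  apply/orthogonal_pairP; split=> [w | a b]; rewrite in_set1 => /eqP ->.
    by rewrite inE eqxx.
  by rewrite inE => /andP[].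
move=> X' Y' /orthogonal_pairP [dXY oXY] sX sY.
have vX : v \in X' by rewrite (subsetP sX) ?set11.
have sYY : Y' \subset [set w | (w != v) && ~~ e v w].
  apply/subsetP => w wY; rewrite inE oXY // andbT.
  by apply: contraTneq wY => ->; apply: dXY.
split; last by apply/eqP; rewrite eqEsubset sYY.
apply/eqP; rewrite eqEsubset sX andbT; apply/subsetP => w wX; rewrite in_set1.
apply/negPn/negP => wv; have [evw | nevw] := boolP (e v w).
  case: (esc_v _ evw) => z [ewz zv nevz].
  have zY : z \in Y' by rewrite (subsetP sY) // inE zv nevz.
  by move: (oXY _ _ wX zY); rewrite ewz.
have wY : w \in Y' by rewrite (subsetP sY) // inE wv nevw.
by move: (dXY _ wX); rewrite wY.
Qed.

Lemma mop_singleton_r e v : escapes [rel u w | e w u] v ->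
  maximal_orthogonal_pair e [set w | (w != v) && ~~ e w v] [set v].
Proof. by move/mop_singleton_l/maximal_orthogonal_pair_flip. Qed.

End OrthogonalPairs.

Lemma standard_example_card_le (I : finType) d (a b : I -> 'I_d -> R) :
  (forall i j, (forall c, Rle (a i c) (b j c)) <-> i != j) -> #|I| <= d.
Proof.
move=> le_ab.
have [c bc_lt_ac] : exists c : I -> 'I_d, forall i, Rlt (b i (c i)) (a i (c i)).
  apply: (@fin_all_exists _ (fun=> 'I_d) (fun i c => Rlt (b i c) (a i c))) => i.
  apply: not_all_not_ex => le_ii.
  by have /le_ab := fun c => Rnot_lt_le _ _ (le_ii c); rewrite eqxx.
suff c_inj : injective c by have := leq_card c c_inj; rewrite !card_ord.
move=> i j cij; apply/eqP; apply: contraT => neq_ij.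
have := bc_lt_ac i; have := bc_lt_ac j; rewrite -cij.
have /le_ab/(_ (c i)) := neq_ij; rewrite eq_sym in neq_ij.
have /le_ab/(_ (c i)) := neq_ij; lra.
Qed.

Lemma escaping_independent_card_le (V I : finType) (e : rel V) d (g : I -> V) :
  injective g -> (forall i j, ~~ e (g i) (g j)) ->
  (forall i, escapes e (g i)) -> (forall i, escapes [rel u w | e w u] (g i)) ->
  LG_embeds_in e d -> #|I| <= d.
Proof.
move=> g_inj g_indep out_esc in_esc [f f_emb].
pose a i := ([set g i], [set w | (w != g i) && ~~ e (g i) w]).
pose b i := ([set w | (w != g i) && ~~ e w (g i)], [set g i]).
apply: (@standard_example_card_le _ _ (f \o a) (f \o b)) => i j /=.
have := f_emb (a i) (b j) (mop_singleton_l (out_esc i)) (mop_singleton_r (in_esc j)).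
by rewrite /LG_le /= sub1set inE g_indep andbT (inj_eq g_inj); apply: iff_sym.
Qed.

Section RankedBlocks.
Variables (V B : finType) (e : rel V) (block : V -> B) (rank : V -> nat).
Hypothesis rank_inj : forall v w, block v = block w -> rank v = rank w -> v = w.
Hypothesis edge_up : forall v w, block v = block w -> rank v < rank w ->
  e v w /\ (forall z, e w z -> e v z).

Lemma mop_block_up_closed X Y v w : maximal_orthogonal_pair e X Y ->
  v \in X -> block v = block w -> rank v <= rank w -> w \in X.
Proof.
move=> mXY vX bvw; rewrite leq_eqVlt => /predU1P [rvw | /(edge_up bvw) [evw dom]].
  by rewrite -(rank_inj bvw rvw).
exact: mop_succ_closed mXY vX evw dom.
Qed.

Definition block_trace (X : {set V}) i := [set v in X | block v == i].

Lemma block_trace_card_subset X Y X' Y' :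
  maximal_orthogonal_pair e X Y -> maximal_orthogonal_pair e X' Y' ->
  (forall i, #|block_trace X i| <= #|block_trace X' i|) -> X \subset X'.
Proof.
move=> mXY mXY' le_card; apply/subsetP => v vX; apply: contraT => vX'.
suff : block_trace X' (block v) \proper block_trace X (block v).
  by move/proper_card; rewrite ltnNge le_card.
apply/properP; split; last by exists v; rewrite !inE eqxx !andbT.
apply/subsetP => w; rewrite !inE => /andP[wX' /eqP bwv]; rewrite bwv eqxx andbT.
case: (leqP (rank v) (rank w)) => [le_vw | lt_wv].
  exact: mop_block_up_closed mXY vX (esym bwv) le_vw.
by rewrite (mop_block_up_closed mXY' wX' bwv (ltnW lt_wv)) in vX'.
Qed.

Lemma LG_embeds_in_ranked_blocks : LG_embeds_in e #|B|.
Proof.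
exists (fun p i => INR #|block_trace p.1 (enum_val i)|) => p q mp mq; split.
  move=> le_pq i; apply/le_INR/leP/subset_leq_card/subsetP => v.
  by rewrite !inE => /andP[/(subsetP le_pq) -> ->].
move=> le_f; apply: block_trace_card_subset mp mq _ => b.
by rewrite -(enum_rankK b); apply/leP/INR_le.
Qed.

End RankedBlocks.

Section Bubble.
Variables m n : nat.
Local Notation V := (bub_vertex m n).
Local Notation e := (@bub_edge m n).

Definition bub_row (v : V) : 'I_m + 'I_n :=
  match v with inl u => u | inr (s, _) => inl s end.

Definition bub_rank (v : V) : nat :=
  match v with inl (inl _) => n | inl (inr _) => 0 | inr (_, t) => t end.

Lemma bub_rank_inj v w : bub_row v = bub_row w -> bub_rank v = bub_rank w -> v = w.
Proof.
case: v => [[s|t]|[s t]]; case: w => [[s'|t']|[s' t']] //= [->] //.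
- by move=> n_t'; move: (ltn_ord t'); rewrite -n_t' ltnn.
- by move=> t_n; move: (ltn_ord t); rewrite t_n ltnn.
- by move/val_inj->.
Qed.

Lemma bub_edge_pp s t s' t' :
  e (inr (s, t)) (inr (s', t')) = [&& (s, t) != (s', t'), s' <= s & t <= t'].
Proof. by []. Qed.

Lemma bub_edge_up v w : bub_row v = bub_row w -> bub_rank v < bub_rank w ->
  e v w /\ (forall z, e w z -> e v z).
Proof.
case: v => [[s|t]|[s t]]; case: w => [[s'|t']|[s' t']] //= [<-].
- by rewrite ltnn.
- by move/(ltn_trans (ltn_ord t')); rewrite ltnn.
- move=> _; split=> [|z]; first by rewrite /bub_edge /= eqxx.
  by case: z => [[?|?]|[? ?]]; rewrite /bub_edge /= ?andbF.
- move=> lt_tt'; split.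
    rewrite bub_edge_pp xpair_eqE eqxx leqnn ltnW //= !andbT.
    by apply: contraTN lt_tt' => /eqP ->; rewrite ltnn.
  case=> [[s''|t'']|[s'' t'']] //.
  rewrite !bub_edge_pp !xpair_eqE => /and3P [_ -> le_t't''].
  have lt_tt'' := leq_trans lt_tt' le_t't''.
  rewrite ltnW //= andbT negb_and; apply/orP; right.
  by apply: contraTN lt_tt'' => /eqP ->; rewrite ltnn.
Qed.

Lemma bub_edge_xy u u' : ~~ e (inl u) (inl u').
Proof. by case: u u' => [s|t] [s'|t']; rewrite /bub_edge /= ?andbF. Qed.

Lemma bub_escapes_xy u : escapes e (inl u).
Proof.
move=> w; case: u => [s|t]; case: w => [[s'|t']|[s' t']];
  rewrite /bub_edge /= ?andbF // => /eqP <-.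
by exists (inl (inl s')); rewrite /bub_edge /= eqxx.
Qed.

Lemma bub_escapes_xy_rev u : escapes [rel a b | e b a] (inl u).
Proof.
move=> w; case: u => [s|t]; case: w => [[s'|t']|[s' t']];
  rewrite /bub_edge /= ?andbF // => /eqP ->.
by exists (inl (inr t')); rewrite /bub_edge /= eqxx.
Qed.

End Bubble.

Theorem proposition4p4 (m n : nat) :
  LG_order_dimension (@bub_edge m n) (m + n).
Proof.
have card_xy : #|{: 'I_m + 'I_n}| = m + n by rewrite card_sum !card_ord.
rewrite -card_xy; split.
  exact: LG_embeds_in_ranked_blocks (@bub_rank_inj m n) (@bub_edge_up m n).
move=> d; exact: escaping_independent_card_le inl_inj (@bub_edge_xy m n)
  (@bub_escapes_xy m n) (@bub_escapes_xy_rev m n).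
Qed.
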